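(* Let $f$ be a derivation of a commutator semi-lattice $(X,\leq,\cdot)$. Then for all $a,b\in X$ and every non-negative integer $n$, $$f^n(a\cdot b)\leq \bigvee_{i=0}^n f^i(a)\cdot f^{n-i}(b),$$ where $f^0$ denotes the identity map.
   Context: A join semi-lattice is a poset $(X,\leq)$ with a binary operation $\vee$ that is idempotent, commutative and associative, such that $a\leq b \iff a\vee b=b$ for all $a,b\in X$. A commutator semi-lattice is a triple $(X,\leq,\cdot)$ where $(X,\leq,\vee)$ is a join semi-lattice and $\cdot$ is a binary operation on $X$ such that: $\cdot$ is commutative; $a\cdot b\leq b$ for all $a,b$; and $a\cdot(b\vee c)=(a\cdot b)\vee(a\cdot c)$ for all $a,b,c$. A derivation of a commutator semi-lattice is a map $f:X\to X$ preserving joins ($f(a\vee b)=f(a)\vee f(b)$) and satisfying $f(a\cdot b)\leq (f(a)\cdot b)\vee(a\cdot f(b))$ for all $a,b\in X$. *)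

From Stdlib Require Import Arith.

Record join_semilattice {X : Type} (le : X -> X -> Prop) (join : X -> X -> X)
  : Prop := {
  js_refl : forall a, le a a;
  js_antisym : forall a b, le a b -> le b a -> a = b;
  js_trans : forall a b c, le a b -> le b c -> le a c;
  js_idem : forall a, join a a = a;
  js_comm : forall a b, join a b = join b a;
  js_assoc : forall a b c, join a (join b c) = join (join a b) c;
  js_le_join : forall a b, le a b <-> join a b = b
}.

Record commutator_semilattice {X : Type} (le : X -> X -> Prop)
  (join : X -> X -> X) (dot : X -> X -> X) : Prop := {
  cs_js : join_semilattice le join;
  cs_dot_comm : forall a b, dot a b = dot b a;
  cs_dot_le : forall a b, le (dot a b) b;
  cs_dot_join : forall a b c, dot a (join b c) = join (dot a b) (dot a c)
}.

Definition derivation {X : Type} (le : X -> X -> Prop)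
  (join : X -> X -> X) (dot : X -> X -> X) (f : X -> X) : Prop :=
  (forall a b, f (join a b) = join (f a) (f b)) /\
  (forall a b, le (f (dot a b)) (join (dot (f a) b) (dot a (f b)))).

Definition fpow {X : Type} (f : X -> X) (n : nat) : X -> X := Nat.iter n f.

Fixpoint bigjoin {X : Type} (join : X -> X -> X) (F : nat -> X) (n : nat) : X :=
  match n with
  | 0 => F 0
  | S m => join (bigjoin join F m) (F (S m))
  end.

(* Applying the monotone,
   join-preserving map f to the bound for n distributes f over the join;
   the derivation inequality splits each f (f^i a . f^(n-i) b) into
   f^(i+1) a . f^(n-i) b and f^i a . f^(n+1-i) b, both of which are terms
   of the join for n+1. *)
From Stdlib Require Import Arith Lia.

Section JoinSemilattice.

Variables (X : Type) (le : X -> X -> Prop) (join : X -> X -> X).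
Hypothesis Hjs : join_semilattice le join.

Let le_refl := js_refl _ _ Hjs.
Let le_trans := js_trans _ _ Hjs.
Let le_join := js_le_join _ _ Hjs.

Lemma le_joinl x y : le x (join x y).
Proof. apply le_join. rewrite (js_assoc _ _ Hjs), (js_idem _ _ Hjs). reflexivity. Qed.

Lemma le_joinr x y : le y (join x y).
Proof. rewrite (js_comm _ _ Hjs). apply le_joinl. Qed.

Lemma join_lub x y z : le x z -> le y z -> le (join x y) z.
Proof.
  intros Hx Hy. apply le_join in Hx. apply le_join in Hy.
  apply le_join. rewrite <- (js_assoc _ _ Hjs), Hy, Hx. reflexivity.
Qed.

Lemma bigjoin_ub (F : nat -> X) n j : j <= n -> le (F j) (bigjoin join F n).
Proof.
  induction n as [|n IHn]; intros Hj; simpl.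
  - replace j with 0 by lia. apply le_refl.
  - destruct (Nat.eq_dec j (S n)) as [-> | Hne].
    + apply le_joinr.
    + apply le_trans with (bigjoin join F n); [apply IHn; lia | apply le_joinl].
Qed.

Lemma bigjoin_lub (F : nat -> X) n c :
  (forall j, j <= n -> le (F j) c) -> le (bigjoin join F n) c.
Proof.
  induction n as [|n IHn]; intros Hc; simpl.
  - apply Hc; lia.
  - apply join_lub; [apply IHn; intros; apply Hc | apply Hc]; lia.
Qed.

Variable g : X -> X.
Hypothesis g_join : forall x y, g (join x y) = join (g x) (g y).

Lemma join_hom_le x y : le x y -> le (g x) (g y).
Proof. intros Hxy. apply le_join in Hxy. apply le_join. rewrite <- g_join, Hxy. reflexivity. Qed.

Lemma join_hom_bigjoin (F : nat -> X) n :
  g (bigjoin join F n) = bigjoin join (fun i => g (F i)) n.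
Proof. induction n as [|n IHn]; simpl; [|rewrite g_join, IHn]; reflexivity. Qed.

End JoinSemilattice.

Lemma fpow_S {X : Type} (f : X -> X) n x : fpow f (S n) x = f (fpow f n x).
Proof. reflexivity. Qed.

Section Derivation.

Variables (X : Type) (le : X -> X -> Prop) (join dot : X -> X -> X) (f : X -> X).
Hypothesis Hjs : join_semilattice le join.
Hypothesis Hder : derivation le join dot f.

Definition leibniz_term (a b : X) n i := dot (fpow f i a) (fpow f (n - i) b).

Lemma derivation_leibniz_term_le a b n i : i <= n ->
  le (f (leibniz_term a b n i)) (bigjoin join (leibniz_term a b (S n)) (S n)).
Proof.
  intros Hi. apply (js_trans _ _ Hjs) with
    (join (dot (fpow f (S i) a) (fpow f (n - i) b))
          (dot (fpow f i a) (fpow f (S (n - i)) b))).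
  { apply (proj2 Hder). }
  apply (join_lub _ _ _ Hjs).
  - replace (n - i) with (S n - S i) by lia.
    apply (bigjoin_ub _ _ _ Hjs (leibniz_term a b (S n))); lia.
  - replace (S (n - i)) with (S n - i) by lia.
    apply (bigjoin_ub _ _ _ Hjs (leibniz_term a b (S n))); lia.
Qed.

Lemma derivation_leibniz_le a b n :
  le (fpow f n (dot a b)) (bigjoin join (leibniz_term a b n) n).
Proof.
  induction n as [|n IHn].
  - apply (js_refl _ _ Hjs).
  - rewrite fpow_S.
    apply (js_trans _ _ Hjs) with (f (bigjoin join (leibniz_term a b n) n)).
    { apply (join_hom_le _ _ _ Hjs f (proj1 Hder)), IHn. }
    rewrite (join_hom_bigjoin _ _ f (proj1 Hder)).
    apply (bigjoin_lub _ _ _ Hjs). apply derivation_leibniz_term_le.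
Qed.

End Derivation.

Theorem proposition2p9 (X : Type) (le : X -> X -> Prop)
  (join dot : X -> X -> X) (f : X -> X) :
  commutator_semilattice le join dot ->
  derivation le join dot f ->
  forall (a b : X) (n : nat),
    le (fpow f n (dot a b))
       (bigjoin join (fun i => dot (fpow f i a) (fpow f (n - i) b)) n).
Proof.
  intros Hcs Hder a b n. exact (derivation_leibniz_le _ _ _ _ _ (cs_js _ _ _ Hcs) Hder a b n).
Qed.
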